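(* For any digraphs $G$ and $H$, there is a homomorphism $G\to\delta H$ if and only if there is a homomorphism $\delta^{-1}G\to H$.
   Context: Digraphs are finite, $G=(V,A)$ with $A\subseteq V\times V$; a homomorphism is an arc-preserving map of vertex sets, and $G\to H$ means a homomorphism from $G$ to $H$ exists. The arc graph of $G=(V,A)$ is $\delta G=(A,\delta A)$ with $\delta A=\{((u,v),(v,w)) : (u,v),(v,w)\in A\}$. For an equivalence $\sim$ on $V(G)$, the quotient $G/{\sim}$ has vertex set the equivalence classes, and $(X,Y)$ is an arc iff some $x\in X$, $y\in Y$ have $(x,y)\in A(G)$. Define $\delta^{-1}G$ as follows: let $V'=\{o_u,t_u : u\in V\}$ (new, distinct symbols), $A'=\{(o_u,t_u): u\in V\}$, let $\sim_0$ be the relation with $t_u\sim_0 o_v$ iff $(u,v)\in A$, let $\sim$ be the smallest equivalence relation on $V'$ containing $\sim_0$, and set $\delta^{-1}G=(V',A')/{\sim}$. *)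

From mathcomp Require Import all_boot.
Set Implicit Arguments.
Unset Strict Implicit.
Unset Printing Implicit Defensive.

Record digraph := Digraph { vertex : finType; arc : rel vertex }.

Definition is_hom (G H : digraph) (f : vertex G -> vertex H) : Prop :=
  forall x y, arc x y -> arc (f x) (f y).

Definition hom_exists (G H : digraph) : Prop :=
  exists f : vertex G -> vertex H, is_hom f.

Definition arc_vertex (G : digraph) : finType :=
  {p : vertex G * vertex G | arc p.1 p.2}.

Definition arc_graph (G : digraph) : digraph :=
  @Digraph (arc_vertex G) (fun a b => (val a).2 == (val b).1).

Definition equiv_closure (T : finType) (r : rel T) : rel T :=
  connect (fun x y => r x y || r y x).

Definition eq_class (T : finType) (R : rel T) (x : T) : {set T} :=
  [set y | R x y].

Definition class_type (T : finType) (R : rel T) : finType :=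
  {C : {set T} | [exists x, C == eq_class R x]}.

Definition quotient_digraph (G : digraph) (R : rel (vertex G)) : digraph :=
  @Digraph (class_type R)
    (fun X Y => [exists x, [exists y,
        [&& x \in val X, y \in val Y & arc x y]]]).

(* delta^{-1} G.  V' = {o_u, t_u : u in V} encoded as V + V with
   o_u = inl u and t_u = inr u; A' = {(o_u, t_u)}. *)
Definition inv_vertex (G : digraph) : finType := (vertex G + vertex G)%type.

Definition inv_pre (G : digraph) : digraph :=
  @Digraph (inv_vertex G)
    (fun a b => match a, b with inl u, inr v => u == v | _, _ => false end).

Definition inv_rel0 (G : digraph) : rel (inv_vertex G) :=
  fun a b => match a, b with inr u, inl v => arc u v | _, _ => false end.

Definition inv_arc_graph (G : digraph) : digraph :=
  @quotient_digraph (inv_pre G) (equiv_closure (@inv_rel0 G)).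

From Pilot Require Import Defs.
From mathcomp Require Import all_boot.
Set Implicit Arguments.
Unset Strict Implicit.
Unset Printing Implicit Defensive.

(* The digraph delta^{-1} G is the quotient of the perfect matching
   P(G) = {o_u -> t_u : u in V(G)} by the equivalence generated by
   t_u ~0 o_v for the arcs (u,v) of G.

   1. Universal property of quotients (valid for any digraph and any
      generating relation r): a homomorphism G/~ -> H exists iff some
      homomorphism G -> H identifies every r-related pair.
   2. Homomorphisms G -> delta H are the same as homomorphisms P(G) -> H
      identifying t_u with o_v for every arc (u,v): a map sending u to the
      arc (f(o_u), f(t_u)) of H is a homomorphism to delta H exactly when
      the head of the image of u equals the tail of the image of each
      out-neighbour v of u. *)

Lemma connect_invariant (T : finType) (e : rel T) (U : Type) (g : T -> U) :
  (forall x y, e x y -> g x = g y) -> forall x y, connect e x y -> g x = g y.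
Proof.
move=> g_e x y /connectP [p e_p ->]; elim: p x e_p => [|z p IHp] x //=.
by case/andP=> e_xz e_p; rewrite (g_e _ _ e_xz) (IHp _ e_p).
Qed.

Section Quotient.

Variables (G : digraph) (r : rel (vertex G)).

Let R := equiv_closure r.

Lemma equiv_closure_sym x y : R x y = R y x.
Proof. by apply: sym_connect_sym => a b; rewrite orbC. Qed.

Fact class_of_subproof x : [exists y, eq_class R x == eq_class R y].
Proof. by apply/existsP; exists x. Qed.

Definition class_of (x : vertex G) : vertex (quotient_digraph R) :=
  exist _ (eq_class R x) (class_of_subproof x).

Lemma mem_class_of x : x \in val (class_of x).
Proof. by rewrite inE; apply: connect0. Qed.

Lemma class_of_eq x y : R x y -> class_of x = class_of y.
Proof.
move=> Rxy; apply: val_inj; apply/setP => z; rewrite !inE.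
apply/idP/idP => [Rxz | Ryz]; last exact: connect_trans Rxy Ryz.
by rewrite equiv_closure_sym in Rxy; apply: connect_trans Rxy Rxz.
Qed.

Lemma class_of_hom : is_hom class_of.
Proof.
move=> x y xy; apply/existsP; exists x; apply/existsP; exists y.
by rewrite !mem_class_of xy.
Qed.

Definition class_repr (C : vertex (quotient_digraph R)) : vertex G :=
  xchoose (existsP (valP C)).

Lemma class_repr_equiv (C : vertex (quotient_digraph R)) x :
  x \in val C -> R (class_repr C) x.
Proof. by rewrite (eqP (xchooseP (existsP (valP C)))) inE. Qed.

Lemma quotient_homP (H : digraph) :
  hom_exists (quotient_digraph R) H <->
  exists2 f : vertex G -> vertex H,
    is_hom f & forall x y, r x y -> f x = f y.
Proof.
split=> [[h h_hom] | [f f_hom f_r]].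
  exists (h \o class_of) => [x y xy | x y rxy] /=.
    exact/h_hom/class_of_hom.
  by rewrite (@class_of_eq x y) //; apply: connect1; rewrite rxy.
have f_R : forall x y, R x y -> f x = f y.
  by apply: connect_invariant => x y /orP [] /f_r.
exists (f \o class_repr) => X Y /existsP [x /existsP [y /and3P [xX yY xy]]].
by rewrite /= (f_R _ _ (class_repr_equiv xX)) (f_R _ _ (class_repr_equiv yY)) f_hom.
Qed.

End Quotient.

Section ArcGraph.

Variables G H : digraph.

(* Gluing homomorphisms: maps P(G) -> H that are homomorphisms and identify
   t_u with o_v along every arc (u,v) of G.  They correspond to homomorphisms
   G -> delta H: u is sent to the arc (g o_u, g t_u) of H, and conversely o_u
   and t_u are sent to the tail and head of the image of u. *)
Lemma arc_graph_homP :
  hom_exists G (arc_graph H) <->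
  exists2 g : vertex (inv_pre G) -> vertex H,
    is_hom g & forall a b, inv_rel0 a b -> g a = g b.
Proof.
split=> [[f f_hom] | [g g_hom g_glue]].
  exists (fun a => match a with inl u => (val (f u)).1
                              | inr u => (val (f u)).2 end).
    by move=> [u|u] [v|v] //= /eqP <-; apply: (valP (f u)).
  by move=> [u|u] [v|v] //= uv; apply/eqP/(f_hom _ _ uv).
have g_arc u : Defs.arc (g (inl u)) (g (inr u)) by apply: g_hom => /=.
exists (fun u => Sub (g (inl u), g (inr u)) (g_arc u)) => u v uv /=.
by rewrite (g_glue (inr u) (inl v)).
Qed.

End ArcGraph.

(* Both sides are equivalent to the existence of a gluing homomorphism
   P(G) -> H. *)
Theorem proposition2p1 (G H : digraph) :
  hom_exists G (arc_graph H) <-> hom_exists (inv_arc_graph G) H.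
Proof. exact: iff_trans (arc_graph_homP G H) (iff_sym (quotient_homP _ H)). Qed.
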